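(* Let $\mathbf{A} \in \mathbb{R}^{n\times d}$ be a sensing matrix, let $\mathbf{x}^* \in \mathbb{R}^d$ with $K = \|\mathbf{x}^*\|_0$, and let the measurements be $\mathbf{y} = \mathbf{A}\mathbf{x}^* + \boldsymbol{\varepsilon}$ with noise $\boldsymbol{\varepsilon} \in \mathbb{R}^n$. Pick an integer $k \ge K$ and let $\nu = 1 + \frac{\rho + \sqrt{(4+\rho)\rho}}{2}$ with $\rho = \frac{\min\{K, d-k\}}{k - K + \min\{K, d-k\}}$. Consider the iterative hard thresholding (IHT) iterates $$\mathbf{x}^{t} = \mathcal{H}_k\big(\mathbf{x}^{t-1} + \mathbf{A}^\top(\mathbf{y} - \mathbf{A}\mathbf{x}^{t-1})\big), \quad t \ge 1.$$ If the restricted isometry constant satisfies $\delta_{2k+K} \le 1/\sqrt{8\nu}$, then the sequence $(\mathbf{x}^t)$ converges to $\mathbf{x}^*$, up to the energy of the noise, with a geometric rate of $0.5$ (i.e. the error is reduced by a factor $0.5$ per iteration up to an additive term proportional to $\|\boldsymbol{\varepsilon}\|_2$).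
   Context: $\mathcal{H}_k(\mathbf{v})$ keeps the $k$ largest-in-magnitude entries of $\mathbf{v}$ and zeros the rest (ties broken lexicographically). The $r$-th restricted isometry constant $\delta_r$ of $\mathbf{A}$ is the smallest $\delta \ge 0$ such that $(1-\delta)\|\mathbf{x}\|_2^2 \le \|\mathbf{A}\mathbf{x}\|_2^2 \le (1+\delta)\|\mathbf{x}\|_2^2$ for all $r$-sparse $\mathbf{x} \in \mathbb{R}^d$. *)

From HB Require Import structures.
From mathcomp Require Import all_boot all_order all_algebra.
From mathcomp Require Import reals.
Set Implicit Arguments. Unset Strict Implicit. Unset Printing Implicit Defensive.
Import Order.TTheory GRing.Theory Num.Theory.
Local Open Scope ring_scope.

Section Defs.
Variable R : realType.

Definition l2norm (d : nat) (v : 'cV[R]_d) : R :=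
  Num.sqrt (\sum_(i < d) v i 0 ^+ 2).

Definition l0norm (d : nat) (v : 'cV[R]_d) : nat :=
  #|[set i : 'I_d | v i 0 != 0]|.

Definition sparse (d r : nat) (v : 'cV[R]_d) : Prop := (l0norm v <= r)%N.

(* Hard thresholding H_k: keep entry i iff fewer than k entries precede it in
   the order "larger magnitude first, ties broken by smaller index first". *)
Definition hard_thr (d k : nat) (v : 'cV[R]_d) : 'cV[R]_d :=
  let a := fun j : 'I_d => `|v j 0| in
  \col_(i < d)
    (if (#|[set j : 'I_d | ((a i < a j)%R) || (((a j == a i)%R) && (nat_of_ord j < nat_of_ord i)%N)]| < k)%N
     then v i 0 else 0).

Definition RIP (n d r : nat) (A : 'M[R]_(n, d)) (delta : R) : Prop :=
  forall x : 'cV[R]_d, sparse r x ->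
    (1 - delta) * l2norm x ^+ 2 <= l2norm (A *m x) ^+ 2 /\
    l2norm (A *m x) ^+ 2 <= (1 + delta) * l2norm x ^+ 2.

Definition is_RIC (n d r : nat) (A : 'M[R]_(n, d)) (delta : R) : Prop :=
  0 <= delta /\ RIP r A delta /\
  forall delta' : R, 0 <= delta' -> RIP r A delta' -> delta <= delta'.

Definition IHT_step (n d k : nat) (A : 'M[R]_(n, d)) (y : 'cV[R]_n)
  (x : 'cV[R]_d) : 'cV[R]_d :=
  hard_thr k (x + A^T *m (y - A *m x)).

Definition rho_of (d k K : nat) : R :=
  (minn K (d - k))%:R / ((k - K)%:R + (minn K (d - k))%:R).

Definition nu_of (d k K : nat) : R :=
  1 + (rho_of d k K + Num.sqrt ((4 + rho_of d k K) * rho_of d k K)) / 2.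

End Defs.

From HB Require Import structures.
From mathcomp Require Import all_boot all_order all_algebra.
From mathcomp Require Import reals.
From mathcomp Require Import ring lra zify.
Import Order.TTheory GRing.Theory Num.Theory.
Set Implicit Arguments. Unset Strict Implicit. Unset Printing Implicit Defensive.
Local Open Scope ring_scope.

(* One IHT step from a k-sparse x with error e = x - x* thresholds
   u = x* + (e - A^T A e) + A^T eps.  On S = supp H_k(u) U supp x* U supp x,
   which has at most 2k + K elements, the RIP makes I - A^T A a
   delta-contraction, so the restriction of u - x* to S has norm at most
   delta |e| + sqrt(1 + delta) |eps|.  Against a K-sparse target, hard
   thresholding loses at most a factor 2 + 2 rho <= 2 nu in squared norm: every
   kept entry dominates every dropped one, so the energy of x* dropped by H_k
   is at most rho times the energy H_k keeps outside supp x*.  With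
   delta <= 1 / sqrt(8 nu) this gives |x^(t+1) - x*| <= |x^t - x*| / 2 + 3 |eps|,
   hence the rate 1/2 with C = 6. *)

Lemma sum_mulrn_card_le (R : numDomainType) (I : finType) (P Q : {pred I}) (F : I -> R) :
  (forall i j, i \in P -> j \in Q -> F i <= F j) ->
  (\sum_(i in P) F i) *+ #|Q| <= (\sum_(j in Q) F j) *+ #|P|.
Proof.
move=> FPQ; rewrite -!sumrMnl.
under eq_bigr do rewrite -sumr_const.
under [in leRHS]eq_bigr do rewrite -sumr_const.
rewrite [leRHS]exchange_big /=.
by apply: ler_sum => i Pi; apply: ler_sum => j Qj; apply: FPQ.
Qed.

Lemma halving_recursion_le (R : realFieldType) (a : nat -> R) (c : R) : 0 <= c ->
  (forall t, a t.+1 <= 2^-1 * a t + c) -> forall t, a t <= 2^-1 ^+ t * a 0 + 2 * c.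
Proof.
move=> c_ge0 step; elim=> [|t IH]; first by rewrite expr0 mul1r; lra.
apply: le_trans (step t) _; rewrite exprS -mulrA.
have half_ge0 : 0 <= 2^-1 :> R by rewrite invr_ge0.
by have := ler_wpM2l half_ge0 IH; lra.
Qed.

Section InnerProduct.
Variable R : realFieldType.
Implicit Types (d : nat) (a : R).

Definition vdot d (u v : 'cV[R]_d) : R := \sum_(i < d) u i 0 * v i 0.
Definition sqnorm d (v : 'cV[R]_d) : R := vdot v v.

Lemma vdotC d (u v : 'cV[R]_d) : vdot u v = vdot v u.
Proof. by apply: eq_bigr => i _; rewrite mulrC. Qed.

Lemma vdotDl d (u v w : 'cV[R]_d) : vdot (u + v) w = vdot u w + vdot v w.
Proof. by rewrite /vdot -big_split; apply: eq_bigr => i _; rewrite mxE mulrDl. Qed.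

Lemma vdotNl d (u w : 'cV[R]_d) : vdot (- u) w = - vdot u w.
Proof. by rewrite /vdot -sumrN; apply: eq_bigr => i _; rewrite mxE mulNr. Qed.

Lemma vdotBl d (u v w : 'cV[R]_d) : vdot (u - v) w = vdot u w - vdot v w.
Proof. by rewrite vdotDl vdotNl. Qed.

Lemma vdotZl d a (u w : 'cV[R]_d) : vdot (a *: u) w = a * vdot u w.
Proof. by rewrite /vdot mulr_sumr; apply: eq_bigr => i _; rewrite mxE mulrA. Qed.

Lemma vdotDr d (u v w : 'cV[R]_d) : vdot w (u + v) = vdot w u + vdot w v.
Proof. by rewrite vdotC vdotDl !(vdotC w). Qed.

Lemma vdotBr d (u v w : 'cV[R]_d) : vdot w (u - v) = vdot w u - vdot w v.
Proof. by rewrite vdotC vdotBl !(vdotC w). Qed.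

Lemma vdotZr d a (u w : 'cV[R]_d) : vdot w (a *: u) = a * vdot w u.
Proof. by rewrite vdotC vdotZl vdotC. Qed.

Lemma vdot_mulmxl n d (A : 'M[R]_(n, d)) (w : 'cV[R]_d) (z : 'cV[R]_n) :
  vdot (A *m w) z = vdot w (A^T *m z).
Proof.
have vdotE m (u v : 'cV[R]_m) : vdot u v = (u^T *m v) 0 0.
  by rewrite mxE; apply: eq_bigr => i _; rewrite mxE.
by rewrite !vdotE trmx_mul mulmxA.
Qed.

Lemma sqnorm_ge0 d (v : 'cV[R]_d) : 0 <= sqnorm v.
Proof. by apply: sumr_ge0 => i _; rewrite -expr2 sqr_ge0. Qed.

Lemma sqnormD d (u v : 'cV[R]_d) : sqnorm (u + v) = sqnorm u + 2 * vdot u v + sqnorm v.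
Proof. rewrite /sqnorm vdotDl !vdotDr (vdotC v u); ring. Qed.

Lemma sqnormB d (u v : 'cV[R]_d) : sqnorm (u - v) = sqnorm u - 2 * vdot u v + sqnorm v.
Proof. rewrite /sqnorm vdotBl !vdotBr (vdotC v u); ring. Qed.

Lemma sqnormZ d a (u : 'cV[R]_d) : sqnorm (a *: u) = a ^+ 2 * sqnorm u.
Proof. rewrite /sqnorm vdotZl vdotZr; ring. Qed.

Lemma sqnormB_le d (u v : 'cV[R]_d) : sqnorm (u - v) <= 2 * sqnorm u + 2 * sqnorm v.
Proof. by have := sqnorm_ge0 (u + v); rewrite sqnormB sqnormD; lra. Qed.

Lemma discr_le_of_quadratic_ge0 (p q X : R) : 0 <= p ->
  (forall s, 0 <= s ^+ 2 * p - 2 * s * X + q) -> X ^+ 2 <= p * q.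
Proof.
move=> p_ge0 quad_ge0; have q_ge0 := quad_ge0 0.
have [p0|p_neq0] := eqVneq p 0.
  have [->|X_neq0] := eqVneq X 0; first by rewrite p0; nra.
  have := quad_ge0 ((q + 1) / X); have : (q + 1) / X * X = q + 1 by rewrite divfK.
  rewrite p0; nra.
have p_gt0 : 0 < p by rewrite lt_def p_neq0 p_ge0.
have := quad_ge0 (X / p); have : X / p * p = X by rewrite divfK.
nra.
Qed.

Lemma vdot_sqr_le d (u v : 'cV[R]_d) : vdot u v ^+ 2 <= sqnorm u * sqnorm v.
Proof.
apply: discr_le_of_quadratic_ge0 => [|s]; first exact: sqnorm_ge0.
by have := sqnorm_ge0 (s *: u - v); rewrite sqnormB sqnormZ vdotZl; lra.
Qed.

Lemma le_of_sqr_le (x y : R) : 0 <= y -> x ^+ 2 <= y ^+ 2 -> x <= y.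
Proof.
move=> y_ge0; have [x_le0|x_gt0] := leP x 0; first by move=> _; exact: le_trans x_le0 y_ge0.
move=> le_sqr; rewrite -ler_sqr ?nnegrE //; exact: ltW.
Qed.

Definition supported d (v : 'cV[R]_d) (S : {set 'I_d}) : Prop :=
  forall i, i \notin S -> v i 0 = 0.

Lemma supportedD d (u v : 'cV[R]_d) S :
  supported u S -> supported v S -> supported (u + v) S.
Proof. by move=> su sv i iS; rewrite mxE su // sv // addr0. Qed.

Lemma supportedB d (u v : 'cV[R]_d) S :
  supported u S -> supported v S -> supported (u - v) S.
Proof. by move=> su sv i iS; rewrite !mxE su // sv // subr0. Qed.

Lemma supportedZ d a (u : 'cV[R]_d) S : supported u S -> supported (a *: u) S.
Proof. by move=> su i iS; rewrite mxE su // mulr0. Qed.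

Definition restrict d (S : {set 'I_d}) (v : 'cV[R]_d) : 'cV[R]_d :=
  \col_i (if i \in S then v i 0 else 0).

Lemma restrict_supported d (S : {set 'I_d}) v : supported (restrict S v) S.
Proof. by move=> i iS; rewrite mxE (negbTE iS). Qed.

Lemma sqnorm_restrict d (S : {set 'I_d}) v :
  sqnorm (restrict S v) = \sum_(i in S) v i 0 ^+ 2.
Proof.
rewrite /sqnorm /vdot [RHS]big_mkcond; apply: eq_bigr => i _; rewrite mxE.
by case: (i \in S); rewrite ?mulr0 // expr2.
Qed.

Lemma vdot_restrictl d (S : {set 'I_d}) v : vdot (restrict S v) v = sqnorm (restrict S v).
Proof.
by apply: eq_bigr => i _; rewrite !mxE; case: (i \in S); rewrite ?mul0r.
Qed.

Lemma restrictB d (S : {set 'I_d}) (u v : 'cV[R]_d) :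
  restrict S (u - v) = restrict S u - restrict S v.
Proof. by apply/matrixP => i j; rewrite !mxE; case: (i \in S); rewrite ?subr0. Qed.

Lemma vdot_restrict_disjoint d (S S' : {set 'I_d}) (u v : 'cV[R]_d) :
  [disjoint S & S'] -> vdot (restrict S u) (restrict S' v) = 0.
Proof.
move=> dis; apply: big1 => i _; rewrite !mxE.
case: ifP => [iS|]; last by rewrite mul0r.
by rewrite (disjointFr dis iS) mulr0.
Qed.

Lemma sqnorm_restrict_setID d (S S' : {set 'I_d}) v :
  sqnorm (restrict S v) = sqnorm (restrict (S :&: S') v) + sqnorm (restrict (S :\: S') v).
Proof. by rewrite !sqnorm_restrict (big_setID S'). Qed.

Lemma sqnorm_restrict_le d (S S' : {set 'I_d}) v :
  S \subset S' -> sqnorm (restrict S v) <= sqnorm (restrict S' v).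
Proof.
move=> sub; rewrite !sqnorm_restrict [leRHS](big_setID S) /= (setIidPr sub).
by rewrite lerDl sumr_ge0 // => i _; rewrite sqr_ge0.
Qed.

End InnerProduct.

Section RestrictedIsometry.
Variable R : realType.

Lemma l2normE d (v : 'cV[R]_d) : l2norm v = Num.sqrt (sqnorm v).
Proof. by congr Num.sqrt; apply: eq_bigr => i _; rewrite expr2. Qed.

Lemma l2norm_ge0 d (v : 'cV[R]_d) : 0 <= l2norm v.
Proof. exact: sqrtr_ge0. Qed.

Lemma l2norm_sqr d (v : 'cV[R]_d) : l2norm v ^+ 2 = sqnorm v.
Proof. by rewrite l2normE sqr_sqrtr // sqnorm_ge0. Qed.

Lemma vdot_le_l2norm d (u v : 'cV[R]_d) : vdot u v <= l2norm u * l2norm v.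
Proof.
apply: le_of_sqr_le; first by rewrite mulr_ge0 ?l2norm_ge0.
by rewrite exprMn !l2norm_sqr vdot_sqr_le.
Qed.

Lemma l0norm_le_card d (v : 'cV[R]_d) (S : {set 'I_d}) :
  supported v S -> (l0norm v <= #|S|)%N.
Proof.
move=> sv; apply/subset_leq_card/subsetP => i; rewrite inE.
by apply: contraR => /sv ->.
Qed.

Variables (n d r : nat) (A : 'M[R]_(n, d)) (delta : R).
Hypotheses (delta_ge0 : 0 <= delta) (A_RIP : RIP r A delta).

Lemma RIP_l2norm_le (v : 'cV[R]_d) (S : {set 'I_d}) :
  (#|S| <= r)%N -> supported v S -> l2norm (A *m v) <= Num.sqrt (1 + delta) * l2norm v.
Proof.
move=> Sr sv; have [_ A_le] := A_RIP (leq_trans (l0norm_le_card sv) Sr).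
apply: le_of_sqr_le; first by rewrite mulr_ge0 ?sqrtr_ge0 ?l2norm_ge0.
by rewrite exprMn (@sqr_sqrtr _ (1 + delta)) // addr_ge0.
Qed.

Lemma RIP_sqnorm_dev (v : 'cV[R]_d) (S : {set 'I_d}) :
  (#|S| <= r)%N -> supported v S -> `|sqnorm v - sqnorm (A *m v)| <= delta * sqnorm v.
Proof.
move=> Sr sv; have [lo hi] := A_RIP (leq_trans (l0norm_le_card sv) Sr).
by rewrite !l2norm_sqr in lo hi; rewrite ler_norml; apply/andP; split; lra.
Qed.

(* Polarization: the RIP on [s *: w + e] and [s *: w - e], for every [s],
   gives a quadratic in [s] with nonpositive discriminant. *)
Lemma RIP_vdot_dev (w e : 'cV[R]_d) (S : {set 'I_d}) :
  (#|S| <= r)%N -> supported w S -> supported e S ->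
  vdot w e - vdot (A *m w) (A *m e) <= delta * l2norm w * l2norm e.
Proof.
move=> Sr sw se; apply: le_of_sqr_le; first by rewrite !mulr_ge0 ?l2norm_ge0.
have -> : (delta * l2norm w * l2norm e) ^+ 2 = (delta * sqnorm w) * (delta * sqnorm e).
  by rewrite -!l2norm_sqr; ring.
apply: discr_le_of_quadratic_ge0 => [|s]; first by rewrite mulr_ge0 ?sqnorm_ge0.
have := RIP_sqnorm_dev Sr (supportedD (supportedZ s sw) se).
have := RIP_sqnorm_dev Sr (supportedB (supportedZ s sw) se).
rewrite mulmxBr mulmxDr -!scalemxAr !sqnormB !sqnormD !sqnormZ !vdotZl !ler_norml.
by move=> /andP[? ?] /andP[? ?]; lra.
Qed.

Lemma restrict_residual_le (e : 'cV[R]_d) (eps : 'cV[R]_n) (S : {set 'I_d}) :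
  (#|S| <= r)%N -> supported e S ->
  l2norm (restrict S (e - A^T *m (A *m e) + A^T *m eps)) <=
    delta * l2norm e + Num.sqrt (1 + delta) * l2norm eps.
Proof.
move=> Sr se; set w := restrict S _.
have sw : supported w S by apply: restrict_supported.
set B := _ + _; have B_ge0 : 0 <= B by rewrite addr_ge0 ?mulr_ge0 ?sqrtr_ge0 ?l2norm_ge0.
have w_sqr : l2norm w ^+ 2 <= l2norm w * B.
  rewrite l2norm_sqr -vdot_restrictl -/w vdotDr vdotBr -!vdot_mulmxl /B mulrDr.
  have := RIP_vdot_dev Sr sw se.
  have := vdot_le_l2norm (A *m w) eps.
  have := ler_wpM2r (l2norm_ge0 eps) (RIP_l2norm_le Sr sw).
  lra.
have [w_gt0|] := ltP 0 (l2norm w); first by rewrite -(ler_pM2l w_gt0) -expr2.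
by move=> w_le0; exact: le_trans w_le0 B_ge0.
Qed.

End RestrictedIsometry.

Section Constants.
Variable R : realType.
Variables (d k K : nat).

Lemma rho_of_ge0 : 0 <= rho_of R d k K.
Proof. by rewrite divr_ge0 ?addr_ge0 ?ler0n. Qed.

Lemma rho_of_le1 : rho_of R d k K <= 1.
Proof.
rewrite /rho_of; have [->|m_gt0] := posnP (minn K (d - k)); first by rewrite mul0r ler01.
by rewrite ler_pdivrMr ?mul1r ?lerDr ?ler0n // ltr_wpDl ?ler0n ?ltr0n.
Qed.

Lemma rho_le_nu : 1 + rho_of R d k K <= nu_of R d k K.
Proof.
rewrite /nu_of; have := rho_of_ge0; set rho := rho_of R d k K => rho_ge0.
suff : rho <= Num.sqrt ((4 + rho) * rho) by lra.
apply: le_of_sqr_le; first exact: sqrtr_ge0.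
have rho4_ge0 : 0 <= 4 + rho by lra.
by rewrite (sqr_sqrtr (mulr_ge0 rho4_ge0 rho_ge0)) expr2 ler_wpM2r // lerDr.
Qed.

Lemma IHT_rate_constants delta : 0 <= delta -> delta <= 1 / Num.sqrt (8 * nu_of R d k K) ->
  Num.sqrt (2 + 2 * rho_of R d k K) * delta <= 2^-1 /\
  Num.sqrt (2 + 2 * rho_of R d k K) * Num.sqrt (1 + delta) <= 3.
Proof.
move=> delta_ge0 delta_le; have := rho_of_ge0; have := rho_of_le1; have := rho_le_nu.
set rho := rho_of R d k K; set nu := nu_of R d k K => rho_nu rho_le1 rho_ge0.
set c := 2 + 2 * rho; have c_ge0 : 0 <= c by rewrite /c; lra.
have lin : Num.sqrt c * delta <= 2^-1.
  apply: le_of_sqr_le; first by rewrite invr_ge0.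
  have nu8_ge0 : 0 <= 8 * nu by lra.
  have sqrt_gt0 : 0 < Num.sqrt (8 * nu) by rewrite sqrtr_gt0; lra.
  have delta_sqr : delta ^+ 2 * (8 * nu) <= 1.
    rewrite -(sqr_sqrtr nu8_ge0) -exprMn; apply: exprn_ile1.
      exact: mulr_ge0 delta_ge0 (ltW sqrt_gt0).
    by rewrite -ler_pdivlMr.
  have : c * delta ^+ 2 <= 2 * nu * delta ^+ 2 by rewrite ler_wpM2r ?sqr_ge0 /c; lra.
  rewrite exprMn sqr_sqrtr // expr2; lra.
have delta1_ge0 : 0 <= 1 + delta by lra.
split=> //; rewrite -sqrtrM //; apply: le_of_sqr_le; first exact: ler0n.
rewrite (sqr_sqrtr (mulr_ge0 c_ge0 delta1_ge0)).
have c_le4 : c <= 4 by rewrite /c; lra.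
have : 1 * delta <= Num.sqrt c * delta.
  by apply: ler_wpM2r => //; rewrite -sqrtr1 ler_sqrt /c; lra.
have : c * delta <= 4 * delta by apply: ler_wpM2r.
lra.
Qed.

End Constants.

Section HardThresholding.
Variable R : realType.
Variables (d k : nat) (b : 'cV[R]_d).

Definition precedes (i : 'I_d) : {set 'I_d} :=
  [set j | (`|b i 0| < `|b j 0|) || ((`|b j 0| == `|b i 0|) && (j < i)%N)].

Definition kept : {set 'I_d} := [set i | (#|precedes i| < k)%N].

Lemma hard_thrE i : hard_thr k b i 0 = if i \in kept then b i 0 else 0.
Proof. by rewrite mxE inE. Qed.

Lemma precedes_irr i : i \notin precedes i.
Proof. by rewrite inE ltxx eqxx ltnn. Qed.

Lemma precedes_trans i j l : j \in precedes i -> l \in precedes j -> l \in precedes i.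
Proof.
rewrite !inE => /orP[lt_ij|/andP[/eqP eq_ij lt_ij]] /orP[lt_jl|/andP[/eqP eq_jl lt_jl]].
- by rewrite (lt_trans lt_ij lt_jl).
- by rewrite eq_jl lt_ij.
- by rewrite -eq_ij lt_jl.
- by rewrite eq_jl eq_ij eqxx (ltn_trans lt_jl lt_ij) orbT.
Qed.

Lemma precedes_total i j : i != j -> (j \in precedes i) || (i \in precedes j).
Proof.
move=> neq_ij; rewrite !inE; case: ltgtP => //= _.
by rewrite orbC -neq_ltn.
Qed.

Lemma precedes_proper i j : j \in precedes i -> precedes j \proper precedes i.
Proof.
move=> ji; apply/properP; split; last by exists j; rewrite ?precedes_irr.
by apply/subsetP => l; apply: precedes_trans.
Qed.

Lemma card_precedes_lt i : (#|precedes i| < d)%N.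
Proof.
have : precedes i \proper [set: 'I_d].
  by rewrite properT; apply: contraNneq (precedes_irr i) => ->; rewrite inE.
by move/proper_card; rewrite cardsT card_ord.
Qed.

Definition thr_rank (i : 'I_d) : 'I_d := Ordinal (card_precedes_lt i).

Lemma thr_rank_inj : injective thr_rank.
Proof.
move=> i j /(congr1 val) /= eq_card; apply: contraTeq isT => neq_ij.
by case/orP: (precedes_total neq_ij) => /precedes_proper/proper_card;
  rewrite eq_card ltnn.
Qed.

Lemma card_kept : #|kept| = minn k d.
Proof.
have -> : kept = thr_rank @^-1: [set r : 'I_d | (r < k)%N] by apply/setP => i; rewrite !inE.
rewrite card_preimset; last exact: thr_rank_inj.
case: (leqP k d) => [le_kd|lt_dk].
  have widen_inj : injective (widen_ord le_kd) by move=> r s /(congr1 val) /= /val_inj.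
  rewrite -[RHS](card_ord k) -cardsT -(card_imset _ widen_inj).
  apply: eq_card => r; rewrite inE; apply/idP/imsetP => [lt_rk|[s _ ->]].
    by exists (Ordinal lt_rk) => //; apply: val_inj.
  exact: ltn_ord s.
rewrite -[RHS]card_ord -cardsT; apply: eq_card => r.
by rewrite !inE (leq_trans (ltn_ord r) (ltnW lt_dk)).
Qed.

Lemma sparse_hard_thr : sparse k (hard_thr k b).
Proof.
apply: leq_trans (l0norm_le_card (S := kept) _) _; last by rewrite card_kept geq_minl.
by move=> i /negbTE i_dropped; rewrite hard_thrE i_dropped.
Qed.

Lemma card_kept_dropped i : i \notin kept -> #|kept| = k /\ (k < d)%N.
Proof.
rewrite inE -leqNgt => le_k_pre; have lt_kd := leq_ltn_trans le_k_pre (card_precedes_lt i).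
by rewrite card_kept (minn_idPl (ltnW lt_kd)).
Qed.

Lemma kept_abs_ge i j : i \in kept -> j \notin kept -> `|b j 0| <= `|b i 0|.
Proof.
rewrite !inE -leqNgt => kept_i dropped_j; rewrite leNgt; apply: contraL kept_i => lt_ji.
rewrite -leqNgt (leq_trans dropped_j) //; apply/subset_leq_card/subsetP => l.
rewrite !inE => /orP[lt_jl|/andP[/eqP -> _]]; last by rewrite lt_ji.
by rewrite (lt_trans lt_ji lt_jl).
Qed.

Lemma sqnorm_dropped_le (T : {set 'I_d}) : (#|T| <= k)%N ->
  sqnorm (restrict (T :\: kept) b) <= rho_of R d k #|T| * sqnorm (restrict (kept :\: T) b).
Proof.
move=> le_Tk; rewrite !sqnorm_restrict.
set B := \sum_(i in _) _; set C := \sum_(i in _) _.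
have B_ge0 : 0 <= B by apply: sumr_ge0 => i _; rewrite sqr_ge0.
have C_ge0 : 0 <= C by apply: sumr_ge0 => i _; rewrite sqr_ge0.
have [/eqP|/card_gt0P[i]] := posnP #|T :\: kept|.
  by rewrite cards_eq0 /B => /eqP->; rewrite big_set0 mulr_ge0 ?rho_of_ge0.
rewrite inE => /andP[i_dropped i_T]; have [card_J lt_kd] := card_kept_dropped i_dropped.
set p := #|T :\: kept|; set q := #|kept :\: T|.
set m := minn #|T| (d - k); set g := (k - #|T|)%N.
have p_le_m : (p <= m)%N.
  rewrite leq_min subset_leq_card ?subsetDl //=.
  have := cardsC kept; rewrite card_ord card_J => <-; rewrite addKn.
  by apply: subset_leq_card; rewrite setDE subsetIr.
have q_eq : q = (g + p)%N.
  have := cardsID kept T; have := cardsID T kept; rewrite setIC card_J -/p -/q.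
  by rewrite /g; lia.
have mean : B *+ q <= C *+ p.
  apply: sum_mulrn_card_le => u v; rewrite !in_setD => /andP[u_dropped _] /andP[_ v_kept].
  rewrite -(real_normK (num_real (b u 0))) -(real_normK (num_real (b v 0))).
  by rewrite ler_sqr ?nnegrE ?normr_ge0 ?kept_abs_ge.
have p_gt0 : (0 < p)%N by apply/card_gt0P; exists i; rewrite inE i_dropped i_T.
rewrite q_eq -[B *+ _]mulr_natr -[C *+ _]mulr_natr natrD in mean.
have p_le_m' : p%:R <= m%:R :> R by rewrite ler_nat.
have p_gt0' : 0 < p%:R :> R by rewrite ltr0n.
have g_ge0 : 0 <= g%:R :> R := ler0n R g.
(* [p / (g + p)] is increasing in [p], and [p <= m]. *)
rewrite /rho_of -/m -/g mulrAC ler_pdivlMr; last by lra.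
rewrite -(ler_pM2l p_gt0').
have := ler_wpM2l (ler0n R m) mean.
have : 0 <= B * g%:R * (m%:R - p%:R) by rewrite !mulr_ge0 ?subr_ge0.
lra.
Qed.

Lemma sqnorm_hard_thr_sub_le (x : 'cV[R]_d) (S : {set 'I_d}) :
  sparse k x -> kept :|: [set i | x i 0 != 0] \subset S ->
  sqnorm (hard_thr k b - x) <=
    (2 + 2 * rho_of R d k (l0norm x)) * sqnorm (restrict S (b - x)).
Proof.
rewrite /sparse /l0norm; set T := [set i | _] => le_Tk sub_S.
set rho := rho_of R d k #|T|; set F := fun A => sqnorm (restrict A (b - x)).
have F_ge0 A : 0 <= F A by apply: sqnorm_ge0.
have x_out i : i \notin T -> x i 0 = 0 by rewrite inE negbK => /eqP.
have split_err : hard_thr k b - x = restrict kept (b - x) - restrict (T :\: kept) x.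
  apply/matrixP => i j; rewrite [j]ord1 mxE hard_thrE !mxE in_setD.
  case: (i \in kept) => /=; first by rewrite subr0.
  by case: (boolP (i \in T)) => [|/x_out ->]; rewrite ?subrr // add0r.
have missed : restrict (T :\: kept) x = restrict (T :\: kept) b - restrict (T :\: kept) (b - x).
  by rewrite restrictB opprB addrC subrK.
have extra : restrict (kept :\: T) b = restrict (kept :\: T) (b - x).
  apply/matrixP => i j; rewrite !mxE in_setD.
  by case: (boolP (i \in T)) => //= /x_out ->; rewrite subr0.
have err_le : sqnorm (hard_thr k b - x) <= F kept + 2 * F (T :\: kept) + 2 * rho * F (kept :\: T).
  have dis : [disjoint kept & T :\: kept].
    by rewrite disjoint_sym disjoints_subset setDE subsetIr.
  rewrite split_err sqnormB vdot_restrict_disjoint // mulr0 subr0 -/(F kept).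
  have := sqnorm_dropped_le le_Tk; rewrite extra -/rho -/(F _) => dropped.
  have := sqnormB_le (restrict (T :\: kept) b) (restrict (T :\: kept) (b - x)).
  rewrite -missed -/(F _); lra.
have F_JT : F (kept :|: T) = F kept + F (T :\: kept).
  by rewrite /F (sqnorm_restrict_setID _ kept) setUK setDUl setDv set0U.
have F_sub (A : {set 'I_d}) : A \subset S -> F A <= F S by apply: sqnorm_restrict_le.
have := F_sub _ sub_S; have := F_ge0 kept.
have : rho * F (kept :\: T) <= rho * F S.
  apply: ler_wpM2l; first exact: rho_of_ge0.
  by apply/F_sub/(subset_trans _ sub_S); rewrite setDE subIset ?subsetUl.
rewrite -/(F S); lra.
Qed.

End HardThresholding.

Lemma IHT_step_error (R : realType) n d k (A : 'M[R]_(n, d)) (xs x : 'cV[R]_d) (eps : 'cV[R]_n) delta :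
  (l0norm xs <= k)%N -> 0 <= delta -> RIP (2 * k + l0norm xs) A delta -> sparse k x ->
  l2norm (IHT_step k A (A *m xs + eps) x - xs) <=
    Num.sqrt (2 + 2 * rho_of R d k (l0norm xs)) *
      (delta * l2norm (x - xs) + Num.sqrt (1 + delta) * l2norm eps).
Proof.
move=> le_Kk delta_ge0 A_RIP sparse_x; rewrite /IHT_step.
have c_ge0 : 0 <= 2 + 2 * rho_of R d k (l0norm xs) by have := @rho_of_ge0 R d k (l0norm xs); lra.
set u := x + _; set S := kept k u :|: [set i | xs i 0 != 0] :|: [set i | x i 0 != 0].
have card_S : (#|S| <= 2 * k + l0norm xs)%N.
  apply: leq_trans (leq_card_setU _ _).1 _.
  rewrite addnC mul2n -addnn -addnA leq_add //.
  apply: leq_trans (leq_card_setU _ _).1 _.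
  by rewrite leq_add2r card_kept geq_minl.
have err_supp : supported (x - xs) S.
  move=> i; rewrite !inE !negb_or !negbK => /andP[/andP[_ /eqP xs_i] /eqP x_i].
  by rewrite !mxE xs_i x_i subr0.
have residual : u - xs = (x - xs) - A^T *m (A *m (x - xs)) + A^T *m eps.
  by rewrite /u !mulmxBr !mulmxDr; apply/matrixP => i j; rewrite !mxE; ring.
have := sqnorm_hard_thr_sub_le (b := u) (S := S) le_Kk (subsetUl _ _).
rewrite -(ler_sqrt _ (mulr_ge0 c_ge0 (sqnorm_ge0 _))) sqrtrM // -!l2normE residual => /le_trans; apply; apply: ler_wpM2l; first exact: sqrtr_ge0.
exact: (restrict_residual_le delta_ge0 A_RIP).
Qed.

Theorem theorem2 (R : realType) :
  exists C : R, 0 <= C /\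
  forall (n d : nat) (A : 'M[R]_(n, d)) (xstar : 'cV[R]_d) (eps : 'cV[R]_n)
         (k : nat) (delta : R) (x : nat -> 'cV[R]_d),
    let K := l0norm xstar in
    let y := A *m xstar + eps in
    (K <= k)%N ->
    is_RIC (2 * k + K) A delta ->
    delta <= 1 / Num.sqrt (8 * nu_of R d k K) ->
    sparse k (x 0%N) ->
    (forall t : nat, x t.+1 = IHT_step k A y (x t)) ->
    forall t : nat,
      l2norm (x t - xstar) <= (1 / 2) ^+ t * l2norm (x 0%N - xstar) + C * l2norm eps.
Proof.
exists 6; split=> [|n d A xs eps k delta x K y le_Kk [delta_ge0 [A_RIP _]] delta_le x0_sparse x_rec t].
  by rewrite ler0n.
have x_sparse s : sparse k (x s) by case: s => [|s] //; rewrite x_rec; apply: sparse_hard_thr.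
have [lin_rate eps_rate] := IHT_rate_constants delta_ge0 delta_le.
have step s : l2norm (x s.+1 - xs) <= 2^-1 * l2norm (x s - xs) + 3 * l2norm eps.
  rewrite x_rec; apply: le_trans (IHT_step_error eps le_Kk delta_ge0 A_RIP (x_sparse s)) _.
  rewrite mulrDr (mulrA _ delta) (mulrA _ (Num.sqrt _)).
  by apply: lerD; apply: ler_wpM2r; rewrite ?l2norm_ge0.
have := halving_recursion_le (mulr_ge0 (ler0n R 3) (l2norm_ge0 eps)) step t.
by rewrite div1r; lra.
Qed.
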